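(* Let $a_1,\dots,a_k$ be black-box optimization algorithms in the BBoxER framework described in the context, let $b$ be a budget divisible by $k$, and let $\mathrm{bet\text{-}and\text{-}run}(a_1,\dots,a_k)$ be the algorithm which, with seed $\omega$ split into seeds $\omega^1,\dots,\omega^k$, runs each $a_i$ independently with seed $\omega^i$ and budget $b/k$ on the same dataset, obtaining recommendations $\widehat x_1,\dots,\widehat x_k$, and outputs the $\widehat x_i$ minimizing the empirical loss $\widehat L(\widehat x_i)$. Then $$N\big(\omega,\mathrm{bet\text{-}and\text{-}run}(a_1,\dots,a_k),b\big)\le \sum_{i=1}^k N(\omega^i,a_i,b/k).$$
   Context: BBoxER framework: an initial model $m_0$ and a map $x\mapsto\mathrm{modified}(m_0,x)$; $\mathcal D$ is the class of possible datasets. An algorithm $a$, deterministic given its seed $\omega$, run with budget $b$ on $D\in\mathcal D$, at each iteration $i$ proposes $x_i$, declares finitely many $k_i$ comparison outcomes, and receives $\mathrm{choice}_i\in\{1,\dots,k_i\}$ computed by comparing the proposed models on $D$; finally it recommends $\widehat x$, a deterministic function of $(\omega,a,b,\mathrm{choice}_1,\dots,\mathrm{choice}_b)$. For an algorithm with seed $\omega$ and budget $b$, $N(\omega,a,b)$ denotes the number of distinct possible outcomes (internal states determining the output) as $D$ ranges over $\mathcal D$, i.e. $N(\omega,a,b)=\operatorname{Card}\{S(\omega,D,a,b):D\in\mathcal D\}$ with $S(\omega,D,a,b)=(\omega,\mathrm{choice}_1,\dots,\mathrm{choice}_b)$. $\widehat L$ denotes empirical loss on $D$. *)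

From HB Require Import structures.
From mathcomp Require Import all_boot all_order all_algebra.
From mathcomp Require Import boolp classical_sets functions cardinality.
From mathcomp Require Export finmap.
Set Implicit Arguments. Unset Strict Implicit. Unset Printing Implicit Defensive.
Import Order.TTheory GRing.Theory Num.Theory.
Local Open Scope classical_set_scope.

(*   Omega : seeds, X : search space (x |-> modified(m0,x)), Dat : datasets. *)
(*   An algorithm is deterministic given its seed and budget: at iteration i *)
(*   it proposes, from the previous choices, a point x_i and a number of      *)
(*   comparison outcomes k_i (encoded as k.+1, so there are k.+1 >= 1        *)
(*   outcomes, numbered 0..k), and finally recommends a point from the       *)
(*   seed, the budget and the sequence of choices.                           *)
(*   The dataset D enters only through a comparison procedure                *)
(*   cmp D : seq X -> forall k, 'I_k.+1, computing choice_i by comparing the *)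
(*   proposed models (x_1..x_i) on D.                                        *)

Record bbalgo (Omega X : Type) := BBAlgo {
  bb_propose : Omega -> nat -> seq nat -> X * nat;
  bb_recommend : Omega -> nat -> seq nat -> X }.

Section Framework.
Variables (Omega X : Type).
Variable (Dat : Type).
Variable cmp : Dat -> seq X -> forall k : nat, 'I_k.+1.

Fixpoint run_hist (a : bbalgo Omega X) (w : Omega) (b : nat) (D : Dat) (n : nat)
  : seq X * seq nat :=
  if n is n'.+1 then
    let h := run_hist a w b D n' in
    let p := bb_propose a w b h.2 in
    let xs := rcons h.1 p.1 in
    (xs, rcons h.2 (nat_of_ord (cmp D xs p.2)))
  else ([::], [::]).

Definition choices a w D b : seq nat := (run_hist a w b D b).2.

Definition Sstate a w D b : Omega * seq nat := (w, choices a w D b).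

Definition recommendation a w D b : X := bb_recommend a w b (choices a w D b).

End Framework.

Definition Nout (Omega : choiceType) (X Dat : Type)
  (cmp : Dat -> seq X -> forall k : nat, 'I_k.+1) (Dclass : set Dat)
  (a : bbalgo Omega X) (w : Omega) (b : nat) : nat :=
  #|` fset_set [set Sstate cmp a w D b | D in Dclass] |.

Section BetAndRun.
Variables (Omega0 : Type) (Omega X Dat : Type) (R : realDomainType).
Variable cmp : Dat -> seq X -> forall k : nat, 'I_k.+1.
Variable Lhat : Dat -> X -> R.
Variables (k : nat) (hk : 0 < k).
Variable algs : 'I_k -> bbalgo Omega X.
Variable split : Omega0 -> 'I_k -> Omega.

Definition bar_rec (w : Omega0) (D : Dat) (b : nat) (i : 'I_k) : X :=
  recommendation cmp (algs i) (split w i) D (b %/ k).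

Definition bar_winner (w : Omega0) (D : Dat) (b : nat) : 'I_k :=
  Order.arg_min (Ordinal hk) xpredT (fun i => Lhat D (bar_rec w D b i)).

Definition bar_output (w : Omega0) (D : Dat) (b : nat) : X :=
  bar_rec w D b (bar_winner w D b).

(* the internal state of bet-and-run determining its output: the seed, the   *)
(* index of the selected run, and the choices of that run                    *)
Definition bar_state (w : Omega0) (D : Dat) (b : nat) : Omega0 * ('I_k * seq nat) :=
  let i := bar_winner w D b in (w, (i, choices cmp (algs i) (split w i) D (b %/ k))).

End BetAndRun.

Definition Nbar (Omega0 Omega : choiceType) (X Dat : Type) (R : realDomainType)
  (cmp : Dat -> seq X -> forall k : nat, 'I_k.+1) (Lhat : Dat -> X -> R)
  (Dclass : set Dat) (k : nat) (hk : 0 < k) (algs : 'I_k -> bbalgo Omega X)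
  (split : Omega0 -> 'I_k -> Omega) (w : Omega0) (b : nat) : nat :=
  #|` fset_set [set bar_state cmp Lhat hk algs split w D b | D in Dclass] |.

From HB Require Import structures.
From mathcomp Require Import all_boot all_order all_algebra.
From mathcomp Require Import boolp classical_sets functions cardinality.

(* Whatever the dataset, the state of bet-and-run is the seed, the index i of
   the winning run and the choices of run i, i.e. it is determined by i and the
   state of a_i.  The states of bet-and-run thus lie in the union over i of
   copies of the states of a_i, and a union bound gives the inequality.  All
   these sets are finite because the choices of a run are a branch of the
   decision tree of the algorithm, which does not depend on the dataset. *)

Set Implicit Arguments. Unset Strict Implicit.
Local Open Scope classical_set_scope.

Section Cardinals.
Variables (T U : choiceType).

Lemma leq_card_fset_set_sub (A B : set T) :
  A `<=` B -> finite_set B -> #|` fset_set A| <= #|` fset_set B|.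
Proof.
move=> AB finB; have finA := sub_finite_set AB finB.
by apply: fsubset_leq_card; rewrite -fset_set_sub.
Qed.

Lemma leq_card_fset_set_image (f : T -> U) (A : set T) :
  finite_set A -> #|` fset_set (f @` A)| <= #|` fset_set A|.
Proof. by move=> finA; rewrite fset_set_image //; exact: leq_imfset_card. Qed.

Lemma leq_card_bigfcup (I : Type) (r : seq I) (F : I -> {fset T}) :
  #|` (\bigcup_(i <- r) F i)%fset| <= \sum_(i <- r) #|` F i|.
Proof.
elim: r => [|i r IH]; first by rewrite !big_nil cardfs0.
by rewrite !big_cons; apply: leq_trans (leq_card_fsetU _ _) _; rewrite leq_add2l.
Qed.

Lemma leq_card_fset_set_bigcup (I : finType) (F : I -> set T) :
  (forall i, finite_set (F i)) ->
  #|` fset_set (\bigcup_i F i)| <= \sum_i #|` fset_set (F i)|.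
Proof.
move=> finF; pose G := (\bigcup_(i <- enum I) fset_set (F i))%fset.
have FG : \bigcup_i F i `<=` [set` G].
  move=> x [i _ Fix]; apply/bigfcupP; exists i; first by rewrite mem_enum.
  by rewrite in_fset_set // inE.
apply: leq_trans (leq_card_fset_set_sub FG (finite_fset G)) _.
by rewrite set_fsetK -big_enum; exact: leq_card_bigfcup.
Qed.

End Cardinals.

Section DecisionTree.
Variables (Omega X Dat : Type) (cmp : Dat -> seq X -> forall k : nat, 'I_k.+1).
Variables (a : bbalgo Omega X) (w : Omega) (b : nat).

Fixpoint choice_tree (n : nat) : seq (seq nat) :=
  if n is n'.+1 then
    flatten [seq [seq rcons s j | j <- iota 0 (bb_propose a w b s).2.+1]
            | s <- choice_tree n']
  else [:: [::]].

Lemma run_hist_choices_in_tree (D : Dat) (n : nat) :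
  (run_hist cmp a w b D n).2 \in choice_tree n.
Proof.
elim: n => [|n IH]; first by rewrite inE.
apply/flatten_mapP; exists (run_hist cmp a w b D n).2 => //.
by apply: (map_f (rcons _)); rewrite mem_iota add0n ltn_ord.
Qed.

Lemma finite_Sstates (Dclass : set Dat) :
  finite_set [set Sstate cmp a w D b | D in Dclass].
Proof.
apply: sub_finite_set _ (finite_image (pair w) (finite_seq (choice_tree b))).
move=> _ [D _ <-]; exists (choices cmp a w D b) => //.
exact: run_hist_choices_in_tree.
Qed.

End DecisionTree.

Section BetAndRunStates.
Variables (Omega0 Omega : choiceType) (X Dat : Type) (R : realDomainType).
Variables (cmp : Dat -> seq X -> forall k : nat, 'I_k.+1) (Lhat : Dat -> X -> R).
Variables (Dclass : set Dat) (k : nat) (hk : 0 < k).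
Variables (algs : 'I_k -> bbalgo Omega X) (split : Omega0 -> 'I_k -> Omega).
Variables (w : Omega0) (b : nat).

Definition run_states (i : 'I_k) : set (Omega * seq nat) :=
  [set Sstate cmp (algs i) (split w i) D (b %/ k) | D in Dclass].

Definition tag_run (i : 'I_k) (s : Omega * seq nat) : Omega0 * ('I_k * seq nat) :=
  (w, (i, s.2)).

Lemma bar_states_sub_runs :
  [set bar_state cmp Lhat hk algs split w D b | D in Dclass] `<=`
    \bigcup_i tag_run i @` run_states i.
Proof.
move=> _ [D DclassD <-]; set i := bar_winner cmp Lhat hk algs split w D b.
by exists i => //; exists (Sstate cmp (algs i) (split w i) D (b %/ k)) => //; exists D.
Qed.

End BetAndRunStates.

Theorem theorem4 (Omega0 Omega : choiceType) (X Dat : Type) (R : realDomainType)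
  (cmp : Dat -> seq X -> forall k : nat, 'I_k.+1) (Lhat : Dat -> X -> R)
  (Dclass : set Dat) (k : nat) (hk : 0 < k) (algs : 'I_k -> bbalgo Omega X)
  (split : Omega0 -> 'I_k -> Omega) (w : Omega0) (b : nat) :
  k %| b ->
  Nbar cmp Lhat Dclass hk algs split w b <=
    \sum_(i < k) Nout cmp Dclass (algs i) (split w i) (b %/ k).
Proof.
move=> _.
have fin_tagged i : finite_set (tag_run w i @` run_states cmp Dclass algs split w b i).
  exact/finite_image/finite_Sstates.
have fin_union := bigcup_finite (@finite_finset _ setT) (fun i _ => fin_tagged i).
have sub_union := @bar_states_sub_runs _ _ _ _ _ cmp Lhat Dclass _ hk algs split w b.
apply: leq_trans (leq_card_fset_set_sub sub_union fin_union) _.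
apply: leq_trans (leq_card_fset_set_bigcup fin_tagged) _.
by apply: leq_sum => i _; exact/leq_card_fset_set_image/finite_Sstates.
Qed.
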